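(* Let $\mathbb{A}$ be a 2-category and $p:e\to b$ a 1-cell such that $\mathbb{A}$ has the two-dimensional cokernel diagram of $p$. If $p$ has a left adjoint, then a right Kan extension $(t,\gamma)$ of $p$ along $p$ exists and it is preserved by $\delta^0:b\to b\uparrow_pb$. In particular, in the 2-category $\mathbf{Cat}$ of categories, functors and natural transformations (which has the two-dimensional cokernel diagram of every functor), every functor $p$ having a left adjoint has $\mathrm{Ran}_pp$ preserved by $\delta^0$.
   Context: A 2-category is a $\mathbf{Cat}$-enriched category; composition of 1-cells is juxtaposition, vertical composition of 2-cells is $\cdot$, horizontal composition is $\ast$, $\mathrm{id}_f$ is the identity 2-cell on $f$. An adjunction $l\dashv p$ in $\mathbb{A}$ is given by 1-cells $l:b\to e$, $p:e\to b$ and 2-cells $\varepsilon:lp\Rightarrow\mathrm{id}_e$, $\eta:\mathrm{id}_b\Rightarrow pl$ satisfying the triangle identities. Opcomma object of $p$ along itself: an object $b\uparrow_p b$ with 1-cells $\delta^0,\delta^1:b\to b\uparrow_p b$ and a 2-cell $\alpha:\delta^1p\Rightarrow\delta^0p$ such that for every object $y$ the functor $h\mapsto(h\delta^0,h\delta^1,\mathrm{id}_h\ast\alpha)$, $\xi\mapsto(\xi\ast\mathrm{id}_{\delta^0},\xi\ast\mathrm{id}_{\delta^1})$ is an isomorphism from $\mathbb{A}(b\uparrow_p b,y)$ onto the category of triples $(h_0,h_1:b\to y,\ \beta:h_1p\Rightarrow h_0p)$ with morphisms pairs of 2-cells $(\xi_0:h_0\Rightarrow h_0',\xi_1:h_1\Rightarrow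 h_1')$ satisfying $(\xi_0\ast\mathrm{id}_p)\cdot\beta=\beta'\cdot(\xi_1\ast\mathrm{id}_p)$. Two-dimensional pushout of a span $f_0:c\to c_0$, $f_1:c\to c_1$: an object $P$ with $q_0:c_0\to P$, $q_1:c_1\to P$, $q_0f_0=q_1f_1$, such that for every $y$, $k\mapsto(kq_0,kq_1)$ is an isomorphism from $\mathbb{A}(P,y)$ onto the category of pairs $(k_0,k_1)$ with $k_0f_0=k_1f_1$, whose morphisms are pairs of 2-cells $(\xi_0,\xi_1)$ with $\xi_0\ast\mathrm{id}_{f_0}=\xi_1\ast\mathrm{id}_{f_1}$. $\mathbb{A}$ has the two-dimensional cokernel diagram of $p$ if it has an opcomma object $b\uparrow_p b$ of $p$ along itself and a two-dimensional pushout $b\uparrow_pb\uparrow_pb$ of the span $(\delta^0,\delta^1)$, with 1-cells $D^0,D^2$ satisfying $D^2\delta^0=D^0\delta^1$. Right Kan extension of $f:z\to y$ along $g:z\to x$: a pair $(r:x\to y,\gamma:rg\Rightarrow f)$ such that for each $k:x\to y$, $\beta\mapsto\gamma\cdot(\beta\ast\mathrm{id}_g)$ is a bijection from 2-cells $k\Rightarrow r$ to 2-cells $kg\Rightarrow f$. A 1-cell $d:y\to y'$ preserves it if $(dr,\mathrm{id}_d\ast\gamma)$ is a right Kan extension of $df$ along $g$. *)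

Set Implicit Arguments.
Unset Strict Implicit.

Definition cast2 {X : Type} {C : X -> X -> Type} {f f' g g' : X}
  (e1 : f = f') (e2 : g = g') (x : C f g) : C f' g' :=
  match e1 in _ = f1, e2 in _ = g1 return C f1 g1 with
  | eq_refl, eq_refl => x end.

(* A 2-category = Cat-enriched category.  comp1 g f is the juxtaposition g f
   (first f, then g); vcomp β α is β · α (first α); hcomp β α is β ∗ α. *)
Record TwoCat := {
  Obj : Type;
  Hom : Obj -> Obj -> Type;
  Cell : forall a b : Obj, Hom a b -> Hom a b -> Type;
  id1 : forall a : Obj, Hom a a;
  comp1 : forall a b c : Obj, Hom b c -> Hom a b -> Hom a c;
  id2 : forall (a b : Obj) (f : Hom a b), Cell f f;
  vcomp : forall (a b : Obj) (f g h : Hom a b), Cell g h -> Cell f g -> Cell f h;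
  hcomp : forall (a b c : Obj) (g g' : Hom b c) (f f' : Hom a b),
      Cell g g' -> Cell f f' -> Cell (comp1 g f) (comp1 g' f');
  comp1A : forall (a b c d : Obj) (h : Hom c d) (g : Hom b c) (f : Hom a b),
      comp1 h (comp1 g f) = comp1 (comp1 h g) f;
  comp1_id_l : forall (a b : Obj) (f : Hom a b), comp1 (id1 b) f = f;
  comp1_id_r : forall (a b : Obj) (f : Hom a b), comp1 f (id1 a) = f;
  vcompA : forall (a b : Obj) (f g h k : Hom a b)
      (γ : Cell h k) (β : Cell g h) (α : Cell f g),
      vcomp γ (vcomp β α) = vcomp (vcomp γ β) α;
  vcomp_id_l : forall (a b : Obj) (f g : Hom a b) (α : Cell f g), vcomp (id2 g) α = α;
  vcomp_id_r : forall (a b : Obj) (f g : Hom a b) (α : Cell f g), vcomp α (id2 f) = α;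
  hcomp_id : forall (a b c : Obj) (g : Hom b c) (f : Hom a b),
      hcomp (id2 g) (id2 f) = id2 (comp1 g f);
  interchange : forall (a b c : Obj) (g g' g'' : Hom b c) (f f' f'' : Hom a b)
      (β' : Cell g' g'') (β : Cell g g') (α' : Cell f' f'') (α : Cell f f'),
      hcomp (vcomp β' β) (vcomp α' α) = vcomp (hcomp β' α') (hcomp β α);
  hcompA : forall (a b c d : Obj) (h h' : Hom c d) (g g' : Hom b c) (f f' : Hom a b)
      (γ : Cell h h') (β : Cell g g') (α : Cell f f'),
      cast2 (comp1A h g f) (comp1A h' g' f') (hcomp γ (hcomp β α))
      = hcomp (hcomp γ β) α;
  hcomp_id1_l : forall (a b : Obj) (f f' : Hom a b) (α : Cell f f'),
      cast2 (comp1_id_l f) (comp1_id_l f') (hcomp (id2 (id1 b)) α) = α;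
  hcomp_id1_r : forall (a b : Obj) (f f' : Hom a b) (α : Cell f f'),
      cast2 (comp1_id_r f) (comp1_id_r f') (hcomp α (id2 (id1 a))) = α
}.

Arguments Hom {A} a b : rename.
Arguments Cell {A a b} f g : rename.
Arguments id1 {A} a : rename.
Arguments comp1 {A a b c} g f : rename.
Arguments id2 {A a b} f : rename.
Arguments vcomp {A a b f g h} β α : rename.
Arguments hcomp {A a b c g g' f f'} β α : rename.
Arguments comp1A {A a b c d} h g f : rename.
Arguments comp1_id_l {A a b} f : rename.
Arguments comp1_id_r {A a b} f : rename.

Unset Implicit Arguments.
Section Notions.
Context {A : TwoCat}.

Definition castC {a b : Obj A} {f f' g g' : Hom a b} (e1 : f = f') (e2 : g = g')
  (x : Cell f g) : Cell f' g' := @cast2 _ (@Cell A a b) _ _ _ _ e1 e2 x.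

(* p has a left adjoint: l ⊣ p with l : b -> e, ε : l p ⇒ id_e, η : id_b ⇒ p l,
   satisfying the triangle identities (ε∗id_l)·(id_l∗η) = id_l and
   (id_p∗ε)·(η∗id_p) = id_p (associativity/unit isos are identities, written
   as transports). *)
Definition is_adjunction {e b : Obj A} (l : Hom b e) (p : Hom e b)
  (ε : Cell (comp1 l p) (id1 e)) (η : Cell (id1 b) (comp1 p l)) : Prop :=
  vcomp (castC eq_refl (comp1_id_l l) (hcomp ε (id2 l)))
        (castC (comp1_id_r l) (comp1A l p l) (hcomp (id2 l) η)) = id2 l
  /\
  vcomp (castC (comp1A p l p) (comp1_id_r p) (hcomp (id2 p) ε))
        (castC (comp1_id_l p) eq_refl (hcomp η (id2 p))) = id2 p.

Definition has_left_adjoint {e b : Obj A} (p : Hom e b) : Prop :=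
  exists (l : Hom b e) (ε : Cell (comp1 l p) (id1 e)) (η : Cell (id1 b) (comp1 p l)),
    is_adjunction l p ε η.

(* Opcomma object (B, δ0, δ1, α) of p along itself, α : δ1 p ⇒ δ0 p.
   For every y, the functor h ↦ (hδ0, hδ1, id_h ∗ α),  ξ ↦ (ξ∗id_δ0, ξ∗id_δ1)
   is an isomorphism of categories: bijective on objects and bijective on
   each hom-set (onto the morphisms of triples). *)
Definition opcomma_triple {e b : Obj A} (p : Hom e b) (y : Obj A) : Type :=
  { h0 : Hom b y & { h1 : Hom b y & Cell (comp1 h1 p) (comp1 h0 p) } }.

Definition opcomma_ob {e b : Obj A} (p : Hom e b) {B : Obj A} (d0 d1 : Hom b B)
  (α : Cell (comp1 d1 p) (comp1 d0 p)) {y : Obj A} (h : Hom B y) : opcomma_triple p y :=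
  existT _ (comp1 h d0) (existT _ (comp1 h d1)
    (castC (comp1A h d1 p) (comp1A h d0 p) (hcomp (id2 h) α))).

Definition is_opcomma {e b : Obj A} (p : Hom e b) (B : Obj A) (d0 d1 : Hom b B)
  (α : Cell (comp1 d1 p) (comp1 d0 p)) : Prop :=
  forall y : Obj A,
    (forall T : opcomma_triple p y, exists! h : Hom B y, opcomma_ob p d0 d1 α h = T)
    /\
    (forall (h h' : Hom B y)
       (ξ0 : Cell (comp1 h d0) (comp1 h' d0)) (ξ1 : Cell (comp1 h d1) (comp1 h' d1)),
       vcomp (hcomp ξ0 (id2 p)) (castC (comp1A h d1 p) (comp1A h d0 p) (hcomp (id2 h) α))
       = vcomp (castC (comp1A h' d1 p) (comp1A h' d0 p) (hcomp (id2 h') α)) (hcomp ξ1 (id2 p))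
       -> exists! ξ : Cell h h', hcomp ξ (id2 d0) = ξ0 /\ hcomp ξ (id2 d1) = ξ1).

Definition pushout_pair {c c0 c1 : Obj A} (f0 : Hom c c0) (f1 : Hom c c1) (y : Obj A)
  : Type := { k0 : Hom c0 y & { k1 : Hom c1 y | comp1 k0 f0 = comp1 k1 f1 } }.

Definition pushout_eq {c c0 c1 P y : Obj A} {f0 : Hom c c0} {f1 : Hom c c1}
  {q0 : Hom c0 P} {q1 : Hom c1 P} (Hq : comp1 q0 f0 = comp1 q1 f1) (k : Hom P y)
  : comp1 (comp1 k q0) f0 = comp1 (comp1 k q1) f1 :=
  eq_trans (eq_sym (comp1A k q0 f0)) (eq_trans (f_equal (comp1 k) Hq) (comp1A k q1 f1)).

Definition pushout_ob {c c0 c1 P y : Obj A} (f0 : Hom c c0) (f1 : Hom c c1)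
  (q0 : Hom c0 P) (q1 : Hom c1 P) (Hq : comp1 q0 f0 = comp1 q1 f1) (k : Hom P y)
  : pushout_pair f0 f1 y :=
  existT _ (comp1 k q0) (exist _ (comp1 k q1) (pushout_eq Hq k)).

Definition is_2pushout {c c0 c1 : Obj A} (f0 : Hom c c0) (f1 : Hom c c1)
  (P : Obj A) (q0 : Hom c0 P) (q1 : Hom c1 P) (Hq : comp1 q0 f0 = comp1 q1 f1) : Prop :=
  forall y : Obj A,
    (forall K : pushout_pair f0 f1 y, exists! k : Hom P y, pushout_ob f0 f1 q0 q1 Hq k = K)
    /\
    (forall (k k' : Hom P y)
       (ξ0 : Cell (comp1 k q0) (comp1 k' q0)) (ξ1 : Cell (comp1 k q1) (comp1 k' q1)),
       castC (pushout_eq Hq k) (pushout_eq Hq k') (hcomp ξ0 (id2 f0)) = hcomp ξ1 (id2 f1)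
       -> exists! ξ : Cell k k', hcomp ξ (id2 q0) = ξ0 /\ hcomp ξ (id2 q1) = ξ1).

(* The two-dimensional cokernel diagram of p: an opcomma object b↑_p b of p
   along itself together with a 2-dimensional pushout b↑_p b↑_p b of the span
   (δ0, δ1), with legs D2, D0 satisfying D2 δ0 = D0 δ1. *)
Definition is_2cokernel_diagram {e b : Obj A} (p : Hom e b)
  (B : Obj A) (d0 d1 : Hom b B) (α : Cell (comp1 d1 p) (comp1 d0 p))
  (P : Obj A) (D2 D0 : Hom B P) (HD : comp1 D2 d0 = comp1 D0 d1) : Prop :=
  is_opcomma p B d0 d1 α /\ is_2pushout d0 d1 P D2 D0 HD.

Definition is_right_kan {x y z : Obj A} (f : Hom z y) (g : Hom z x)
  (r : Hom x y) (γ : Cell (comp1 r g) f) : Prop :=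
  forall (k : Hom x y) (θ : Cell (comp1 k g) f),
    exists! β : Cell k r, vcomp γ (hcomp β (id2 g)) = θ.

Definition preserves_right_kan {x y z y' : Obj A} (f : Hom z y) (g : Hom z x)
  (r : Hom x y) (γ : Cell (comp1 r g) f) (d : Hom y y') : Prop :=
  is_right_kan (comp1 d f) g (comp1 d r)
    (castC (comp1A d r g) eq_refl (hcomp (id2 d) γ)).

End Notions.

(* If l ⊣ p with unit η and counit ε, then for every h : e -> y the pair
   (h l, h ε) is a right Kan extension of h along p: a 2-cell θ : k p ⇒ h
   corresponds to (θ l)·(k η) : k ⇒ h l, and the two triangle identities say
   exactly that this assignment is inverse to β ↦ (h ε)·(β p).  Taking h = p
   gives Ran_p p = p l; taking h = d p and using d (p l) = (d p) l shows that
   this Kan extension is preserved by every 1-cell d, in particular by δ^0.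
   So the two-dimensional cokernel diagram is only needed for δ^0 to exist. *)
From Stdlib Require Import ClassicalEpsilon Eqdep.

(* A 2-cell is packed together with its source and target 1-cells, so that the
   transports along the associativity and unit equations of 1-cells disappear:
   on packed cells horizontal composition is associative and unital on the
   nose. *)
Section PackedCells.
Context {A : TwoCat}.

Definition pcell (a b : Obj A) : Type := {f : Hom a b & {g : Hom a b & Cell f g}}.

Definition pack {a b : Obj A} {f g : Hom a b} (x : Cell f g) : pcell a b :=
  existT _ f (existT _ g x).

Definition psrc {a b : Obj A} (X : pcell a b) : Hom a b := projT1 X.
Definition ptgt {a b : Obj A} (X : pcell a b) : Hom a b := projT1 (projT2 X).
Definition unpack {a b : Obj A} (X : pcell a b) : Cell (psrc X) (ptgt X) :=
  projT2 (projT2 X).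

Definition pid2 {a b : Obj A} (f : Hom a b) : pcell a b := pack (id2 f).

Definition phcomp {a b c : Obj A} (Y : pcell b c) (X : pcell a b) : pcell a c :=
  pack (hcomp (unpack Y) (unpack X)).

(* Made total so that it can be rewritten with; on non-composable cells it
   returns X. *)
Definition pvcomp {a b : Obj A} (Y X : pcell a b) : pcell a b :=
  match excluded_middle_informative (ptgt X = psrc Y) with
  | left e => pack (vcomp (unpack Y) (castC eq_refl e (unpack X)))
  | right _ => X
  end.

Lemma pack_castC {a b : Obj A} {f f' g g' : Hom a b} (e1 : f = f') (e2 : g = g')
  (x : Cell f g) : pack (castC e1 e2 x) = pack x.
Proof. destruct e1, e2; reflexivity. Qed.

Lemma pack_inj {a b : Obj A} {f g : Hom a b} (x y : Cell f g) : pack x = pack y -> x = y.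
Proof. intro H; do 2 apply inj_pair2 in H; exact H. Qed.

Lemma pvcomp_pack {a b : Obj A} {f g h : Hom a b} (y : Cell g h) (x : Cell f g) :
  pvcomp (pack y) (pack x) = pack (vcomp y x).
Proof.
  unfold pvcomp; destruct (excluded_middle_informative _) as [e|n].
  - change (g = g) in e; rewrite (UIP_refl _ _ e); reflexivity.
  - contradiction n; reflexivity.
Qed.

Ltac unfold_pcells :=
  unfold phcomp, pid2;
  repeat match goal with
  | |- context [unpack (@pack ?a ?b ?f ?g ?x)] => change (unpack (@pack a b f g x)) with x
  | |- context [psrc (@pack ?a ?b ?f ?g ?x)] => change (psrc (@pack a b f g x)) with f
  | |- context [ptgt (@pack ?a ?b ?f ?g ?x)] => change (ptgt (@pack a b f g x)) with g
  end.

Ltac unpack_cell X :=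
  let f := fresh "f" in let g := fresh "g" in let x := fresh "x" in
  destruct X as [f [g x]]; change (existT _ f (existT _ g x)) with (pack x) in *.

Lemma pvcompA {a b : Obj A} (Z Y X : pcell a b) :
  ptgt X = psrc Y -> ptgt Y = psrc Z -> pvcomp Z (pvcomp Y X) = pvcomp (pvcomp Z Y) X.
Proof.
  unpack_cell X; unpack_cell Y; unpack_cell Z; unfold_pcells; intros -> ->.
  rewrite !pvcomp_pack, vcompA; reflexivity.
Qed.

Lemma pvcomp_id_l {a b : Obj A} (f : Hom a b) (X : pcell a b) :
  f = ptgt X -> pvcomp (pid2 f) X = X.
Proof.
  unpack_cell X; unfold_pcells; intros ->.
  rewrite pvcomp_pack, vcomp_id_l; reflexivity.
Qed.

Lemma pvcomp_id_r {a b : Obj A} (f : Hom a b) (X : pcell a b) :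
  f = psrc X -> pvcomp X (pid2 f) = X.
Proof.
  unpack_cell X; unfold_pcells; intros ->.
  rewrite pvcomp_pack, vcomp_id_r; reflexivity.
Qed.

Lemma phcompA {a b c d : Obj A} (Z : pcell c d) (Y : pcell b c) (X : pcell a b) :
  phcomp Z (phcomp Y X) = phcomp (phcomp Z Y) X.
Proof.
  unpack_cell X; unpack_cell Y; unpack_cell Z; unfold_pcells.
  rewrite <- hcompA; symmetry; apply pack_castC.
Qed.

Lemma phcomp_id_r {a b : Obj A} (X : pcell a b) : phcomp X (pid2 (id1 a)) = X.
Proof.
  unpack_cell X; unfold_pcells.
  rewrite <- (hcomp_id1_r x) at 2; symmetry; apply pack_castC.
Qed.

Lemma phcomp_pid2 {a b c : Obj A} (g : Hom b c) (f : Hom a b) :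
  phcomp (pid2 g) (pid2 f) = pid2 (comp1 g f).
Proof. unfold_pcells; rewrite hcomp_id; reflexivity. Qed.

Lemma phcomp_pvcomp_pid2 {a b c : Obj A} (Y X : pcell b c) (f : Hom a b) :
  ptgt X = psrc Y ->
  phcomp (pvcomp Y X) (pid2 f) = pvcomp (phcomp Y (pid2 f)) (phcomp X (pid2 f)).
Proof.
  unpack_cell X; unpack_cell Y; unfold_pcells; intros ->.
  rewrite !pvcomp_pack, <- interchange, vcomp_id_l; reflexivity.
Qed.

Lemma phcomp_pid2_pvcomp {a b c : Obj A} (g : Hom b c) (Y X : pcell a b) :
  ptgt X = psrc Y ->
  phcomp (pid2 g) (pvcomp Y X) = pvcomp (phcomp (pid2 g) Y) (phcomp (pid2 g) X).
Proof.
  unpack_cell X; unpack_cell Y; unfold_pcells; intros ->.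
  rewrite !pvcomp_pack, <- interchange, vcomp_id_l; reflexivity.
Qed.

Lemma pvcomp_lwhisker_rwhisker {a b c : Obj A} (Y : pcell b c) (X : pcell a b)
  (g : Hom b c) (f : Hom a b) : g = ptgt Y -> f = psrc X ->
  pvcomp (phcomp (pid2 g) X) (phcomp Y (pid2 f)) = phcomp Y X.
Proof.
  unpack_cell X; unpack_cell Y; unfold_pcells; intros -> ->.
  rewrite pvcomp_pack, <- interchange, vcomp_id_l, vcomp_id_r; reflexivity.
Qed.

Lemma pvcomp_rwhisker_lwhisker {a b c : Obj A} (Y : pcell b c) (X : pcell a b)
  (g : Hom a b) (f : Hom b c) : g = ptgt X -> f = psrc Y ->
  pvcomp (phcomp Y (pid2 g)) (phcomp (pid2 f) X) = phcomp Y X.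
Proof.
  unpack_cell X; unpack_cell Y; unfold_pcells; intros -> ->.
  rewrite pvcomp_pack, <- interchange, vcomp_id_l, vcomp_id_r; reflexivity.
Qed.

Lemma is_right_kan_pack {x y z : Obj A} (f : Hom z y) (g : Hom z x) (r r' : Hom x y)
  (γ : Cell (comp1 r g) f) (γ' : Cell (comp1 r' g) f) :
  is_right_kan f g r γ -> r = r' -> pack γ = pack γ' -> is_right_kan f g r' γ'.
Proof. intros Hkan <- Hγ; apply pack_inj in Hγ; subst γ'; exact Hkan. Qed.

End PackedCells.

Ltac boundary :=
  cbn [psrc ptgt phcomp pid2 pack unpack projT1 projT2];
  rewrite ?comp1_id_l, ?comp1_id_r, ?comp1A; reflexivity.

Section RightAdjoint.
Context {A : TwoCat} {e b : Obj A} (l : Hom b e) (p : Hom e b)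
  (ε : Cell (comp1 l p) (id1 e)) (η : Cell (id1 b) (comp1 p l)).
Hypothesis adj : is_adjunction l p ε η.

Lemma triangle_l_pack :
  pvcomp (phcomp (pack ε) (pid2 l)) (phcomp (pid2 l) (pack η)) = pid2 l.
Proof.
  unfold pid2 at 3; rewrite <- (proj1 adj), <- pvcomp_pack, !pack_castC; reflexivity.
Qed.

Lemma triangle_r_pack :
  pvcomp (phcomp (pid2 p) (pack ε)) (phcomp (pack η) (pid2 p)) = pid2 p.
Proof.
  unfold pid2 at 3; rewrite <- (proj2 adj), <- pvcomp_pack, !pack_castC; reflexivity.
Qed.

Definition ran_counit {y : Obj A} (h : Hom e y) : Cell (comp1 (comp1 h l) p) h :=
  castC (comp1A h l p) (comp1_id_r h) (hcomp (id2 h) ε).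

Definition ran_lift {y : Obj A} {h : Hom e y} {k : Hom b y} (θ : Cell (comp1 k p) h)
  : Cell k (comp1 h l) :=
  castC (comp1_id_r k) eq_refl
    (vcomp (hcomp θ (id2 l)) (castC eq_refl (comp1A k p l) (hcomp (id2 k) η))).

Lemma pack_ran_counit {y : Obj A} (h : Hom e y) :
  pack (ran_counit h) = phcomp (pid2 h) (pack ε).
Proof. apply pack_castC. Qed.

Lemma pack_ran_lift {y : Obj A} {h : Hom e y} {k : Hom b y} (θ : Cell (comp1 k p) h) :
  pack (ran_lift θ) = pvcomp (phcomp (pack θ) (pid2 l)) (phcomp (pid2 k) (pack η)).
Proof. unfold ran_lift; rewrite pack_castC, <- pvcomp_pack, pack_castC; reflexivity. Qed.

Lemma ran_counit_lift {y : Obj A} {h : Hom e y} {k : Hom b y} (θ : Cell (comp1 k p) h) :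
  vcomp (ran_counit h) (hcomp (ran_lift θ) (id2 p)) = θ.
Proof.
  apply pack_inj; rewrite <- pvcomp_pack, pack_ran_counit.
  change (pack (hcomp _ (id2 p))) with (phcomp (pack (ran_lift θ)) (pid2 p)).
  rewrite pack_ran_lift, phcomp_pvcomp_pid2 by boundary.
  rewrite <- !phcompA, phcomp_pid2, pvcompA by boundary.
  rewrite pvcomp_lwhisker_rwhisker by boundary.
  rewrite <- (pvcomp_rwhisker_lwhisker (pack θ) (pack ε) (id1 e) (comp1 k p)) by boundary.
  rewrite phcomp_id_r, <- pvcompA by boundary.
  rewrite <- (phcomp_pid2 k p), <- phcompA, <- phcomp_pid2_pvcomp by boundary.
  rewrite triangle_r_pack, phcomp_pid2, pvcomp_id_r by boundary; reflexivity.
Qed.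

Lemma ran_lift_counit {y : Obj A} {h : Hom e y} {k : Hom b y} (β : Cell k (comp1 h l)) :
  ran_lift (vcomp (ran_counit h) (hcomp β (id2 p))) = β.
Proof.
  apply pack_inj; rewrite pack_ran_lift, <- pvcomp_pack, pack_ran_counit.
  change (pack (hcomp β (id2 p))) with (phcomp (pack β) (pid2 p)).
  rewrite phcomp_pvcomp_pid2 by boundary.
  rewrite <- !phcompA, phcomp_pid2, <- pvcompA by boundary.
  rewrite pvcomp_rwhisker_lwhisker by boundary.
  rewrite <- (pvcomp_lwhisker_rwhisker (pack β) (pack η) (comp1 h l) (id1 b)) by boundary.
  rewrite phcomp_id_r, pvcompA by boundary.
  rewrite <- (phcomp_pid2 h l), <- phcompA, <- phcomp_pid2_pvcomp by boundary.
  rewrite triangle_l_pack, phcomp_pid2, pvcomp_id_l by boundary; reflexivity.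
Qed.

Lemma right_adjoint_right_kan {y : Obj A} (h : Hom e y) :
  is_right_kan h p (comp1 h l) (ran_counit h).
Proof.
  intros k θ; exists (ran_lift θ); split.
  - apply ran_counit_lift.
  - intros β <-; apply ran_lift_counit.
Qed.

Lemma right_adjoint_right_kan_preserved {y y' : Obj A} (h : Hom e y) (d : Hom y y') :
  preserves_right_kan h p (comp1 h l) (ran_counit h) d.
Proof.
  eapply is_right_kan_pack; [exact (right_adjoint_right_kan (comp1 d h)) | |].
  - symmetry; apply comp1A.
  - rewrite pack_castC, !pack_ran_counit.
    change (pack (hcomp (id2 d) ?x)) with (phcomp (pid2 d) (pack x)).
    rewrite pack_ran_counit, phcompA, phcomp_pid2; reflexivity.
Qed.

End RightAdjoint.

Theorem proposition4p3 (A : TwoCat) (e b : Obj A) (p : Hom e b)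
  (B : Obj A) (d0 d1 : Hom b B) (α : Cell (comp1 d1 p) (comp1 d0 p))
  (P : Obj A) (D2 D0 : Hom B P) (HD : comp1 D2 d0 = comp1 D0 d1) :
  is_2cokernel_diagram p B d0 d1 α P D2 D0 HD ->
  has_left_adjoint p ->
  exists (t : Hom b b) (γ : Cell (comp1 t p) p),
    is_right_kan p p t γ /\ preserves_right_kan p p t γ d0.
Proof.
  intros _ [l [ε [η adj]]].
  exists (comp1 p l), (ran_counit l p ε p); split.
  - exact (right_adjoint_right_kan l p ε η adj p).
  - exact (right_adjoint_right_kan_preserved l p ε η adj p d0).
Qed.
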